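(* Let $M,N\ge 0$. For every two elements $u<w$ of the poset of shuffles $W_{MN}$ and every $i\ge 0$, there is a bijection between the set of elements of $[u,w]$ of rank $\rho(u)+i$ and the set of elements of $[u,w]$ of rank $\rho(w)-i$.
   Context: Let $\mathcal{A}=\{a_1,\dots,a_M\}$, $\mathcal{X}=\{x_1,\dots,x_N\}$ be disjoint sets. A shuffle word is a word (possibly empty) with distinct letters from $\mathcal{A}\cup\mathcal{X}$ in which the letters of each alphabet appear in increasing order of subscripts. $W_{MN}$ is the set of shuffle words ordered by the reflexive-transitive closure of: $w$ is covered by $w'$ iff $w'$ is obtained from $w$ by deleting a letter of $\mathcal{A}$ or inserting a letter of $\mathcal{X}$. Its rank function is $\rho(w)=(M-\#(\{w\}\cap\mathcal{A}))+\#(\{w\}\cap\mathcal{X})$, where $\{w\}$ is the set of letters of $w$. *)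

From mathcomp Require Import all_boot.
From Stdlib Require Import Relation_Operators.
Set Implicit Arguments. Unset Strict Implicit. Unset Printing Implicit Defensive.

(* Letters: inl a = a_{a+1} in alphabet A, inr x = x_{x+1} in alphabet X. *)
Definition letter (M N : nat) := ('I_M + 'I_N)%type.

Definition getA M N (l : letter M N) : option 'I_M :=
  if l is inl a then Some a else None.
Definition getX M N (l : letter M N) : option 'I_N :=
  if l is inr x then Some x else None.
Definition isA M N (l : letter M N) : bool := if l is inl _ then true else false.
Definition isX M N (l : letter M N) : bool := if l is inr _ then true else false.

Definition is_shuffle M N (w : seq (letter M N)) : bool :=
  [&& uniq w,
      sorted (fun a b : 'I_M => (a < b)%N) (pmap (@getA M N) w) &
      sorted (fun a b : 'I_N => (a < b)%N) (pmap (@getX M N) w)].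

Definition shuffle (M N : nat) := {w : seq (letter M N) | is_shuffle w}.

Definition covers M N (w w' : shuffle M N) : Prop :=
  (exists (w1 w2 : seq (letter M N)) (a : 'I_M),
      val w = w1 ++ inl a :: w2 /\ val w' = w1 ++ w2) \/
  (exists (w1 w2 : seq (letter M N)) (x : 'I_N),
      val w = w1 ++ w2 /\ val w' = w1 ++ inr x :: w2).

Definition wle M N : shuffle M N -> shuffle M N -> Prop :=
  clos_refl_trans (shuffle M N) (@covers M N).

Definition wlt M N (u w : shuffle M N) : Prop := wle u w /\ u <> w.

Definition rho M N (w : shuffle M N) : nat :=
  (M - count (@isA M N) (val w)) + count (@isX M N) (val w).

Definition in_interval M N (u w v : shuffle M N) : Prop := wle u v /\ wle v w.

(* For u <= v <= w the three words merge into one word z from which each of u, v, w is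
   recovered as the subsequence of its own letters.  Exchanging an adjacent pair "x y" of z,
   with x an X-letter not in u and y an A-letter not in w, keeps this property unless both x
   and y lie in v; exchanging as long as possible gives a canonical merge, and it is unique.
   Call a letter free if it may or may not occur in an element of [u, w] (an A-letter missing
   from w, an X-letter missing from u), and pair off greedily the adjacent free pairs
   "X-letter, A-letter" of the canonical z: both letters of a pair lie in v.  Toggling the
   membership of every unpaired free letter gives a word mirror v of [u, w] with the same
   canonical merge, so mirror is an involution.  Each unpaired letter contributes to
   rho v + rho (mirror v) what it contributes to rho u + rho w, and so does each pair as a
   whole; hence the two sums agree. *)

From mathcomp Require Import all_boot zify.
From Stdlib Require Import Relation_Operators Operators_Properties.
From Stdlib Require Import ClassicalEpsilon ProofIrrelevance.
Set Implicit Arguments. Unset Strict Implicit. Unset Printing Implicit Defensive.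

Section SeqFacts.

Variable T : eqType.
Implicit Types (p s z : seq T) (x y : T).

Lemma seq_ind2 (P : seq T -> Prop) :
  P [::] -> (forall x, P [:: x]) ->
  (forall x y s, P s -> P (y :: s) -> P (x :: y :: s)) -> forall s, P s.
Proof.
move=> P0 P1 P2 s; suff: P s /\ forall x, P (x :: s) by case.
by elim: s => [|y s [IHs IHys]]; split => // x; apply: P2.
Qed.

Lemma sorted_adjP (r : rel T) z :
  reflect (forall p x y s, z = p ++ x :: y :: s -> r x y) (sorted r z).
Proof.
apply: (iffP idP).
  move=> srt_z p; elim: p z srt_z => [|h p IHp] z srt_z x y s Ez.
    by move: srt_z; rewrite Ez /= => /andP[].
  by apply: (IHp (p ++ x :: y :: s)) => //; move: srt_z; rewrite Ez => /path_sorted.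
elim: z => [//|a [//|b t] IHz] adj_z /=.
rewrite (adj_z [::] a b t) //=; apply: IHz => p x y s Ez.
by apply: (adj_z (a :: p)); rewrite Ez.
Qed.

Lemma sorted_adjN (r : rel T) z :
  ~~ sorted r z -> exists p x y s, z = p ++ x :: y :: s /\ ~~ r x y.
Proof.
elim: z => [//|a [//|b t] IHz] /=; case r_ab: (r a b) => /= nsrt.
  by have [p [x [y [s [-> nr]]]]] := IHz nsrt; exists (a :: p), x, y, s.
by exists [::], a, b, t; rewrite r_ab.
Qed.

Lemma mem_split x s : x \in s -> exists p r, s = p ++ x :: r.
Proof. by case/splitPr=> p r; exists p, r. Qed.

Lemma uniq_pivot p x s : uniq (p ++ x :: s) = (x \notin p ++ s) && uniq (p ++ s).
Proof.
have /perm_uniq-> // : perm_eq (p ++ x :: s) (x :: p ++ s).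
by rewrite -cat1s perm_catCA.
Qed.

Lemma filter_subset (a : pred T) z s : filter a z = s -> {subset s <= z}.
Proof. by move=> <-; apply: mem_subseq; apply: filter_subseq. Qed.

Lemma filter_subpred (a b : pred T) z :
  subpred a b -> filter a (filter b z) = filter a z.
Proof.
move=> sub_ab; rewrite -filter_predI; apply: eq_filter => x /=.
by case: (boolP (a x)) => [/sub_ab ->|].
Qed.

Lemma filter_prefix_nil (a : pred T) p x s t :
  a x -> x \notin p -> filter a (p ++ x :: s) = filter a (x :: t) -> filter a p = [::].
Proof.
move=> ax xNp; rewrite filter_cat /= ax; case Ep: (filter a p) => [//|h q] [Eh _].
by move: (mem_head h q); rewrite -Ep mem_filter Eh (negbTE xNp) andbF.
Qed.

Lemma filter_cons2 (a : pred T) x s t :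
  filter a (x :: s) = filter a (x :: t) -> filter a s = filter a t.
Proof. by rewrite /=; case: (a x) => // -[]. Qed.

Lemma filter_cat_split (a : pred T) z s1 s2 :
  filter a z = s1 ++ s2 ->
  exists z1 z2, [/\ z = z1 ++ z2, filter a z1 = s1 & filter a z2 = s2].
Proof.
elim: z s1 => [|y z IHz] s1 /=; first by case: s1 => //= <-; exists [::], [::].
case: ifP => ay; last first.
  by move=> /IHz[z1 [z2 [-> <- <-]]]; exists (y :: z1), z2; rewrite /= ay.
case: s1 => [|y' s1] /= Ez; first by exists [::], (y :: z); rewrite /= ay.
case: Ez => <- /IHz[z1 [z2 [-> <- <-]]].
by exists (y :: z1), z2; rewrite /= ay.
Qed.

Lemma count_sum (a : pred T) s : count a s = \sum_(x <- s) a x.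
Proof. by rewrite -sumn_count sumnE big_map. Qed.

Lemma subseq_pmap (U : eqType) (f : T -> option U) s z :
  subseq s z -> subseq (pmap f s) (pmap f z).
Proof.
move=> /subseqP[m sz_m ->]; elim: z m sz_m => [|y z IHz] [|b m] //= [/IHz sub_m].
case: b => /=; case: (f y) => [c|] //=; first by rewrite eqxx.
exact: subseq_trans sub_m (subseq_cons _ _).
Qed.

End SeqFacts.

Section ShuffleWords.

Variables M N : nat.
Implicit Types (l x y : letter M N) (p s z u w : seq (letter M N)).

Lemma isAN l : isA l = ~~ isX l. Proof. by case: l. Qed.

Lemma isXN l : isX l = ~~ isA l. Proof. by case: l. Qed.

Lemma pmap_getA_filter s : pmap (@getA M N) s = pmap (@getA M N) (filter (@isA M N) s).
Proof. by elim: s => //= -[a|x] s ->. Qed.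

Lemma pmap_getX_filter s : pmap (@getX M N) s = pmap (@getX M N) (filter (@isX M N) s).
Proof. by elim: s => //= -[a|x] s ->. Qed.

Lemma uniq_filterAX s :
  uniq (filter (@isA M N) s) -> uniq (filter (@isX M N) s) -> uniq s.
Proof.
elim: s => //= -[a|x] s IHs /=.
  by move=> /andP[aNs uA] uX; rewrite IHs // andbT; apply: contra aNs; rewrite mem_filter.
by move=> uA /andP[xNs uX]; rewrite IHs // andbT; apply: contra xNs; rewrite mem_filter.
Qed.

Lemma is_shuffle_filters z u w : is_shuffle u -> is_shuffle w ->
  filter (@isA M N) z = filter (@isA M N) u -> filter (@isX M N) z = filter (@isX M N) w ->
  is_shuffle z.
Proof.
move=> /and3P[uu srtA _] /and3P[uw _ srtX] zA zX; apply/and3P; split.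
- by apply: uniq_filterAX; [rewrite zA | rewrite zX]; apply: filter_uniq.
- by rewrite pmap_getA_filter zA -pmap_getA_filter.
- by rewrite pmap_getX_filter zX -pmap_getX_filter.
Qed.

Lemma is_shuffle_subseq s z : is_shuffle z -> subseq s z -> is_shuffle s.
Proof.
move=> /and3P[uz srtA srtX] sub_sz; apply/and3P; split.
- exact: subseq_uniq sub_sz uz.
- by apply: subseq_sorted (subseq_pmap _ sub_sz) srtA => ? ? ?; apply: ltn_trans.
- by apply: subseq_sorted (subseq_pmap _ sub_sz) srtX => ? ? ?; apply: ltn_trans.
Qed.

Lemma countA_shuffle s : is_shuffle s -> count (@isA M N) s <= M.
Proof.
move=> /and3P[_ srtA _].
have -> : count (@isA M N) s = size (pmap (@getA M N) s).
  by rewrite size_pmap; apply: eq_count => -[].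
have uA : uniq (pmap (@getA M N) s) by apply: sorted_uniq srtA; [apply: ltn_trans | apply: ltnn].
by rewrite -(card_uniqP uA); apply: leq_trans (max_card _) _; rewrite card_ord.
Qed.

Fixpoint inversions z :=
  if z is l :: t then isX l * count (@isA M N) t + inversions t else 0.

Lemma inversions_swap p s x y : isX x -> isA y ->
  inversions (p ++ y :: x :: s) < inversions (p ++ x :: y :: s).
Proof.
move=> Xx Ay; elim: p => [|h p IHp] /=.
  by rewrite Xx Ay isXN Ay isAN Xx /=; lia.
by rewrite !count_cat /=; lia.
Qed.

End ShuffleWords.

Definition letters_from M N (u w z : seq (letter M N)) :=
  {in z, forall l, l \in if isA l then u else w}.

Definition interleaving M N (u v w z : seq (letter M N)) :=
  [/\ filter [in u] z = u, filter [in v] z = v, filter [in w] z = w & letters_from u w z].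

Section Order.

Variables M N : nat.
Implicit Types (l : letter M N) (p s z u v w : seq (letter M N)) (t : shuffle M N).

Lemma interleaving_delete u v p a s z : uniq (p ++ inl a :: s) ->
  interleaving u v (p ++ inl a :: s) z -> interleaving u v (p ++ s) z.
Proof.
move=> uniq_pas [zu zv zw from_z]; split => // [|l /from_z]; last first.
  by case: l => //= x; rewrite !mem_cat in_cons.
have /(subseq_uniqP uniq_pas) {2}-> : subseq (p ++ s) (p ++ inl a :: s).
  by rewrite cat_subseq ?subseq_cons.
by rewrite -zw filter_subpred // => l /=; rewrite !mem_cat in_cons orbCA => ->; rewrite orbT.
Qed.

Lemma interleaving_insert u v p x s z : inr x \notin p ++ s ->
  interleaving u v (p ++ s) z -> exists z', interleaving u v (p ++ inr x :: s) z'.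
Proof.
move=> xNps [zu zv zw from_z].
have xNz : inr x \notin z by apply: contra xNps => /from_z.
have xNu : inr x \notin u by rewrite -zu mem_filter negb_and xNz orbT.
have xNv : inr x \notin v by rewrite -zv mem_filter negb_and xNz orbT.
have [z1 [z2 [Ez zp zs]]] := filter_cat_split zw.
have same_in : {in z, [in p ++ inr x :: s] =1 [in p ++ s]}.
  move=> l lz /=; rewrite !mem_cat in_cons.
  by case: eqVneq lz => [->|_ _]; [rewrite (negbTE xNz) | ].
have z1p : filter [in p ++ inr x :: s] z1 = p.
  by rewrite -[RHS]zp; apply: eq_in_filter => l lz; apply: same_in; rewrite Ez mem_cat lz.
have z2s : filter [in p ++ inr x :: s] z2 = s.
  by rewrite -[RHS]zs; apply: eq_in_filter => l lz; apply: same_in; rewrite Ez mem_cat lz orbT.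
exists (z1 ++ inr x :: z2); split.
- by rewrite filter_cat /= (negbTE xNu) -filter_cat -Ez.
- by rewrite filter_cat /= (negbTE xNv) -filter_cat -Ez.
- by rewrite filter_cat /= z1p z2s mem_cat mem_head orbT.
- move=> l; rewrite mem_cat in_cons orbCA => /orP[/eqP-> /=|].
    by rewrite mem_cat mem_head orbT.
  rewrite -mem_cat -Ez => /from_z; case: (isA l) => //.
  by rewrite !mem_cat in_cons orbCA => ->; rewrite orbT.
Qed.

Lemma interleaving_covers u v t t' z :
  interleaving u v (val t) z -> covers t t' -> exists z', interleaving u v (val t') z'.
Proof.
case: t t' => [s1 sh1] [s2 sh2] /= Hz [[p [s [a [/= E1 E2]]]]|[p [s [x [/= E1 E2]]]]].
  by exists z; subst; apply: interleaving_delete Hz; case/and3P: sh1.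
subst; apply: interleaving_insert Hz.
by move: sh2 => /and3P[]; rewrite uniq_pivot => /andP[].
Qed.

Lemma interleaving_wle u v t t' z :
  interleaving u v (val t) z -> wle t t' -> exists z', interleaving u v (val t') z'.
Proof.
move=> Hz /clos_rt_rtn1_iff; elim=> [|t1 t2 cov12 _ [z1 Hz1]]; first by exists z.
exact: interleaving_covers Hz1 cov12.
Qed.

Lemma wle_interleaving t1 t2 t3 :
  wle t1 t2 -> wle t2 t3 -> exists z, interleaving (val t1) (val t2) (val t3) z.
Proof.
move=> le12 le23.
have refl1 : interleaving (val t1) (val t1) (val t1) (val t1).
  by split; rewrite ?(all_filterP (allss _)) // => l; case: isA.
have [z [z1 _ z2 from_z]] := interleaving_wle refl1 le12.
by apply: (interleaving_wle (z := z)) le23; split.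
Qed.

Lemma wle_mem t t' : wle t t' ->
  {in val t', forall l, isA l -> l \in val t} /\ {in val t, forall l, isX l -> l \in val t'}.
Proof.
move=> /(wle_interleaving (rt_refl _ _ t)) [z [zt _ zt' from_z]].
split=> l lt; [move: (from_z l (filter_subset zt' lt)) | move: (from_z l (filter_subset zt lt))].
  by case: isA.
by rewrite isAN; case: isX.
Qed.

Lemma interleaving_shuffle u v w z : is_shuffle u -> is_shuffle w ->
  interleaving u v w z -> is_shuffle z.
Proof.
move=> sh_u sh_w [zu _ zw from_z]; apply: is_shuffle_filters sh_u sh_w _ _.
- rewrite -zu -filter_predI; apply: eq_in_filter => l /from_z /=.
  by case: isA => // ->.
- rewrite -zw -filter_predI; apply: eq_in_filter => l /from_z /=.
  by rewrite isAN; case: isX => // ->.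
Qed.

Lemma shuffle_drop t l : l \in val t ->
  exists p r (t1 : shuffle M N), val t = p ++ l :: r /\ val t1 = p ++ r.
Proof.
move=> /mem_split[p [r Et]].
have sh1 : is_shuffle (p ++ r).
  by apply: is_shuffle_subseq (valP t) _; rewrite Et cat_subseq ?subseq_cons.
by exists p, r, (exist _ (p ++ r) sh1).
Qed.

Lemma wle_delete (q : pred (letter M N)) t c :
  {in val t, forall l, ~~ q l -> isA l} -> val c = filter q (val t) -> wle t c.
Proof.
have [n] := ubnP (size (val t)); elim: n t => // n IHn t lt_tn delA Ec.
have [/all_filterP qt | /allPn[l lt nql]] := boolP (all q (val t)).
  have -> : c = t by apply: val_inj; rewrite Ec qt.
  exact: rt_refl.
have [p [r [t1 [Et Et1]]]] := shuffle_drop lt.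
apply: (@rt_trans _ _ _ t1).
  by apply: rt_step; left; move: (delA l lt nql); case: l {lt nql} Et => // a Et _; exists p, r, a.
apply: IHn; rewrite Et1.
- by move: lt_tn; rewrite Et !size_cat /= addnS ltnS.
- by move=> l' l'pr; apply: delA; rewrite Et mem_cat in_cons orbCA -mem_cat l'pr orbT.
- by rewrite Ec Et !filter_cat /= (negbTE nql).
Qed.

Lemma wle_insert (q : pred (letter M N)) t c :
  {in val t, forall l, ~~ q l -> isX l} -> val c = filter q (val t) -> wle c t.
Proof.
have [n] := ubnP (size (val t)); elim: n t => // n IHn t lt_tn insX Ec.
have [/all_filterP qt | /allPn[l lt nql]] := boolP (all q (val t)).
  have -> : c = t by apply: val_inj; rewrite Ec qt.
  exact: rt_refl.
have [p [r [t1 [Et Et1]]]] := shuffle_drop lt.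
apply: (@rt_trans _ _ _ t1); last first.
  by apply: rt_step; right; move: (insX l lt nql); case: l {lt nql} Et => // x Et _; exists p, r, x.
apply: IHn; rewrite Et1.
- by move: lt_tn; rewrite Et !size_cat /= addnS ltnS.
- by move=> l' l'pr; apply: insX; rewrite Et mem_cat in_cons orbCA -mem_cat l'pr orbT.
- by rewrite Ec Et !filter_cat /= (negbTE nql).
Qed.

Lemma wle_filters (p q : pred (letter M N)) z t t' :
  val t = filter p z -> val t' = filter q z ->
  {in z, forall l, p l -> ~~ q l -> isA l} -> {in z, forall l, q l -> ~~ p l -> isX l} ->
  wle t t'.
Proof.
move=> Et Et' delA insX.
have sh_c : is_shuffle (filter q (val t)) by apply: is_shuffle_subseq (valP t) (filter_subseq _ _).
apply: (@rt_trans _ _ _ (exist _ (filter q (val t)) sh_c)).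
  by apply: (wle_delete (q := q)) => // l; rewrite Et mem_filter => /andP[pl lz]; apply: delA.
apply: (wle_insert (q := p)) => /=.
  by move=> l; rewrite Et' mem_filter => /andP[ql lz]; apply: insX.
by rewrite Et Et' -!filter_predI; apply: eq_filter => l /=; rewrite andbC.
Qed.

End Order.

Section Canonical.

Variables (M N : nat) (u w : seq (letter M N)).
Implicit Types (l x y : letter M N) (p s t z v : seq (letter M N)).

Definition free l := if isA l then l \notin w else l \notin u.

Definition pairable x y := [&& isX x, isA y, x \notin u & y \notin w].

Definition swappable v x y := pairable x y && ~~ ((x \in v) && (y \in v)).

Definition canonical v z := sorted (fun x y => ~~ swappable v x y) z.

Lemma canonical_exists v z :
  interleaving u v w z -> exists2 z', interleaving u v w z' & canonical v z'.
Proof.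
have [n] := ubnP (inversions z); elim: n z => // n IHn z lt_zn Hz.
have [|/sorted_adjN[p [x [y [s [Ez /negbNE swp_xy]]]]]] := boolP (canonical v z).
  by exists z.
have /andP[/and4P[Xx Ay xNu yNw] nvxy] := swp_xy.
apply: (IHn (p ++ y :: x :: s)).
  by apply: leq_trans (inversions_swap p s Xx Ay) _; rewrite -Ez -ltnS.
have swap_filter (a : pred (letter M N)) : ~~ (a x && a y) ->
    filter a (p ++ y :: x :: s) = filter a z.
  by rewrite Ez !filter_cat /=; case: (a x); case: (a y).
case: Hz => zu zv zw from_z; split.
- by rewrite swap_filter // (negbTE xNu).
- by rewrite swap_filter.
- by rewrite swap_filter // (negbTE yNw) andbF.
- have perm_z : perm_eq (p ++ y :: x :: s) z by rewrite Ez perm_cat2l (perm_catCA [:: y] [:: x]).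
  by move=> l; rewrite (perm_mem perm_z); apply: from_z.
Qed.

Fixpoint matched z :=
  if z is x :: t then
    if t is y :: s then (if pairable x y then x :: y :: matched s else matched t) else [::]
  else [::].

Lemma matched_subseq z : subseq (matched z) z.
Proof.
elim/seq_ind2: z => [//|x|x y s IHs IHys]; first by rewrite sub0seq.
rewrite /=; case: ifP => _; first by rewrite !eqxx.
exact: subseq_trans IHys (subseq_cons _ _).
Qed.

Lemma count_matched z : count (@isA M N) (matched z) = count (@isX M N) (matched z).
Proof.
elim/seq_ind2: z => [//|//|x y s IHs IHys] /=; case: ifP => [/and4P[Xx Ay _ _]|//].
by rewrite /= Xx Ay isAN Xx isXN Ay IHs.
Qed.

Lemma matched_free v z : canonical v z -> {in matched z, forall l, (l \in v) && free l}.
Proof.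
elim/seq_ind2: z => [//|//|x y s IHs IHys] can_z l /=.
case: ifP => [pair_xy|_]; last by apply: IHys; apply: path_sorted can_z.
move: (can_z) => /= /andP[nswp_xy /path_sorted can_s].
have /andP[xv yv] : (x \in v) && (y \in v) by move: nswp_xy; rewrite /swappable pair_xy negbK.
have /and4P[Xx Ay xNu yNw] := pair_xy.
rewrite !in_cons => /or3P[/eqP->|/eqP->|/IHs]; last exact.
  by rewrite xv /free isAN Xx.
by rewrite yv /free Ay.
Qed.

Lemma matched_pairable z p x y s : z = p ++ x :: y :: s -> pairable x y ->
  (x \in matched z) && (y \in matched z).
Proof.
elim/seq_ind2: z p => [|a|a b t IHt IHbt] [|c p] //=; try by case: p => [|? []].
  by move=> [-> -> ->] ->; rewrite !in_cons !eqxx orbT.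
move=> [_ Ebt] pair_xy; case: ifP => pair_ab; last exact: IHbt Ebt pair_xy.
case: p Ebt => [|d p] /= [Eb Et].
  by move: pair_ab pair_xy; rewrite -Eb => /and4P[_ Ax _ _] /and4P[Xx _ _ _]; rewrite isAN Xx in Ax.
by have /andP[xt yt] := IHt _ Et pair_xy; rewrite !in_cons xt yt !orbT.
Qed.

Lemma letters_from_subset z1 z2 : letters_from u w z2 ->
  filter [in u] z1 = filter [in u] z2 -> filter [in w] z1 = filter [in w] z2 ->
  {subset z2 <= z1}.
Proof.
move=> from2 Eu Ew l lz2.
have mem_z1 s : filter [in s] z1 = filter [in s] z2 -> l \in s -> l \in z1.
  move=> Es ls; have : l \in filter [in s] z1 by rewrite Es mem_filter ls.
  by rewrite mem_filter => /andP[].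
by have := from2 l lz2; case: isA; [apply: mem_z1 Eu | apply: mem_z1 Ew].
Qed.

(* The letter just before l in z would precede l in none of u, v, w, hence be swappable
   with it. *)
Lemma canonical_head_A v z l t : canonical v z -> uniq z -> letters_from u w z ->
  filter [in u] z = filter [in u] (l :: t) -> filter [in v] z = filter [in v] (l :: t) ->
  filter [in w] z = filter [in w] (l :: t) -> l \in z -> isA l -> head l z = l.
Proof.
move=> can_z uz from_z Eu Ev Ew lz Al; have [p [r Ez]] := mem_split lz.
case/lastP: p Ez => [-> //|p m Ez].
have lNpm : l \notin rcons p m.
  by move: uz; rewrite Ez uniq_pivot mem_cat negb_or => /andP[/andP[]].
have before (a : pred (letter M N)) : filter a z = filter a (l :: t) -> a l -> ~~ a m.
  move=> Ea al; apply/negP => am; rewrite Ez in Ea.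
  by have := filter_prefix_nil al lNpm Ea; rewrite filter_rcons am; case: filter.
have mz : m \in z by rewrite Ez mem_cat mem_rcons mem_head.
have lu : l \in u by have := from_z l lz; rewrite Al.
have mNu : m \notin u := before _ Eu lu.
have Xm : isX m by rewrite isXN; apply: contra mNu => Am; have := from_z m mz; rewrite Am.
have mw : m \in w by have := from_z m mz; rewrite isAN Xm.
have lNw : l \notin w by apply/negP => /(before _ Ew); rewrite mw.
have nboth : ~~ ((m \in v) && (l \in v)) by apply/andP => -[mv /(before _ Ev)]; rewrite mv.
have : ~~ swappable v m l by apply: (elimT (sorted_adjP _ _) can_z p); rewrite Ez cat_rcons.
by rewrite /swappable /pairable Xm Al mNu lNw nboth.
Qed.

Lemma canonical_unique v z1 z2 : uniq z1 -> uniq z2 ->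
  letters_from u w z1 -> letters_from u w z2 ->
  filter [in u] z1 = filter [in u] z2 -> filter [in v] z1 = filter [in v] z2 ->
  filter [in w] z1 = filter [in w] z2 -> canonical v z1 -> canonical v z2 -> z1 = z2.
Proof.
elim: z1 z2 => [|l1 t1 IHt] [|l2 t2] // uz1 uz2 from1 from2 Eu Ev Ew can1 can2.
- by have := letters_from_subset from2 Eu Ew (mem_head l2 t2).
- by have := letters_from_subset from1 (esym Eu) (esym Ew) (mem_head l1 t1).
have l2z1 := letters_from_subset from2 Eu Ew (mem_head l2 t2).
have l1z2 := letters_from_subset from1 (esym Eu) (esym Ew) (mem_head l1 t1).
have El : l1 = l2.
  case A2: (isA l2); first exact: (canonical_head_A can1 uz1 from1 Eu Ev Ew l2z1 A2).
  case A1: (isA l1).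
    exact/esym/(canonical_head_A can2 uz2 from2 (esym Eu) (esym Ev) (esym Ew) l1z2 A1).
  have l1w : l1 \in w by have := from1 l1 (mem_head _ _); rewrite A1.
  have l2w : l2 \in w by have := from2 l2 (mem_head _ _); rewrite A2.
  by move: Ew => /=; rewrite l1w l2w => -[].
subst l2; congr (_ :: _); apply: IHt.
- by case/andP: uz1.
- by case/andP: uz2.
- by move=> l lt; apply: from1; rewrite in_cons lt orbT.
- by move=> l lt; apply: from2; rewrite in_cons lt orbT.
- exact: filter_cons2 Eu.
- exact: filter_cons2 Ev.
- exact: filter_cons2 Ew.
- exact: path_sorted can1.
- exact: path_sorted can2.
Qed.

Definition toggle v z := filter (fun l => (l \in v) (+) (free l && (l \notin matched z))) z.

Lemma mem_toggle v z l : l \in z ->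
  (l \in toggle v z) = (l \in v) (+) (free l && (l \notin matched z)).
Proof. by move=> lz; rewrite mem_filter lz andbT. Qed.

Lemma toggle_interleaving v z : interleaving u v w z -> interleaving u (toggle v z) w z.
Proof. by case=> zu _ zw from_z; split=> //; apply: eq_in_filter => l /mem_toggle. Qed.

Lemma toggleK v z : filter [in v] z = v -> toggle (toggle v z) z = v.
Proof.
by move=> zv; rewrite -[RHS]zv; apply: eq_in_filter => l lz; rewrite !mem_toggle // addbK.
Qed.

Lemma canonical_toggle v z : canonical v z -> canonical (toggle v z) z.
Proof.
move=> can_z; apply/sorted_adjP => p x y s Ez; rewrite /swappable.
have [pair_xy|] //= := boolP (pairable x y).
have /andP[xm ym] := matched_pairable Ez pair_xy.
have /andP[xv _] := matched_free can_z xm; have /andP[yv _] := matched_free can_z ym.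
have [xz yz] : x \in z /\ y \in z by rewrite Ez !mem_cat !in_cons !eqxx !orbT.
by rewrite !mem_toggle // xm ym xv yv !andbF.
Qed.

End Canonical.

Section Involution.

Variables (M N : nat) (u w : shuffle M N).
Implicit Types (l : letter M N) (z : seq (letter M N)) (v s : shuffle M N).

Lemma interleaving_in_interval s z : interleaving (val u) (val s) (val w) z ->
  {in val u, forall l, isX l -> l \in val s} -> {in val w, forall l, isA l -> l \in val s} ->
  in_interval u w s.
Proof.
move=> [zu zs zw from_z] Xu_s Aw_s; split.
  apply: (wle_filters (p := [in val u]) (q := [in val s]) (z := z)) => // l lz /=.
    by move=> lu lNs; rewrite isAN; apply: contra lNs; apply: Xu_s.
  by move=> _ lNu; rewrite isXN; apply: contra lNu => Al; have := from_z l lz; rewrite Al.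
apply: (wle_filters (p := [in val s]) (q := [in val w]) (z := z)) => // l lz /=.
  by move=> _ lNw; rewrite isAN; apply: contra lNw => Xl; have := from_z l lz; rewrite isAN Xl.
by move=> lw lNs; rewrite isXN; apply: contra lNs; apply: Aw_s.
Qed.

Lemma toggle_in_interval v s z : in_interval u w v -> interleaving (val u) (val v) (val w) z ->
  val s = toggle (val u) (val w) (val v) z -> in_interval u w s.
Proof.
move=> [le_uv le_vw] Hz Es.
have [[_ Xu_v] [Aw_v _]] := (wle_mem le_uv, wle_mem le_vw).
have [zu _ zw _] := Hz.
apply: (interleaving_in_interval (z := z)); first by rewrite Es; apply: toggle_interleaving.
  move=> l lu Xl; rewrite Es mem_toggle ?(filter_subset zu lu) //.
  by rewrite /free isAN Xl /= lu addbF; apply: Xu_v.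
move=> l lw Al; rewrite Es mem_toggle ?(filter_subset zw lw) //.
by rewrite /free Al lw addbF; apply: Aw_v.
Qed.

Lemma rho_toggle v s z : in_interval u w v -> interleaving (val u) (val v) (val w) z ->
  canonical (val u) (val w) (val v) z -> val s = toggle (val u) (val w) (val v) z ->
  rho s + rho v = rho u + rho w.
Proof.
move=> [le_uv le_vw] Hz can_z Es.
have [[_ Xu_v] [Aw_v _]] := (wle_mem le_uv, wle_mem le_vw).
have [zu zv zw from_z] := Hz.
have zs : filter [in val s] z = val s by rewrite Es; case: (toggle_interleaving Hz).
set m := matched (val u) (val w) z.
have zm : filter [in m] z = m.
  apply/esym/subseq_uniqP; last exact: matched_subseq.
  by case/and3P: (interleaving_shuffle (valP u) (valP w) Hz).
pose c (a : pred (letter M N)) (t : seq (letter M N)) := count (predI a [in t]) z.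
(* Letter by letter, s and v contribute as much as u and w, up to the matched letters. *)
have balance :
    c (@isX M N) (val s) + c (@isX M N) (val v) + c (@isA M N) (val u) + c (@isA M N) (val w)
      + c (@isA M N) m =
    c (@isA M N) (val s) + c (@isA M N) (val v) + c (@isX M N) (val u) + c (@isX M N) (val w)
      + c (@isX M N) m.
  rewrite /c !count_sum -!big_split; apply: eq_big_seq => l lz; rewrite Es /= mem_toggle //.
  move: (from_z l lz) (Xu_v l) (Aw_v l) (matched_free can_z (x := l)); rewrite /free isXN.
  case: (isA l); case: (l \in val u); case: (l \in val w); case: (l \in val v);
    case: (l \in m) => //= _ Xu_v' Aw_v' m_v;
    by [move: (Xu_v' isT isT) | move: (Aw_v' isT isT) | move: (m_v isT)].
rewrite /c -!count_filter zs zv zu zw zm count_matched in balance.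
have := countA_shuffle (valP s); have := countA_shuffle (valP v).
have := countA_shuffle (valP u); have := countA_shuffle (valP w).
move: balance; rewrite /rho /m /=; lia.
Qed.

Definition canonical_witness v : seq (letter M N) :=
  epsilon (inhabits [::])
    (fun z => interleaving (val u) (val v) (val w) z /\ canonical (val u) (val w) (val v) z).

Definition mirror v : shuffle M N :=
  insubd v (toggle (val u) (val w) (val v) (canonical_witness v)).

Lemma canonical_witnessP v : in_interval u w v ->
  interleaving (val u) (val v) (val w) (canonical_witness v) /\
  canonical (val u) (val w) (val v) (canonical_witness v).
Proof.
move=> [le_uv le_vw].
have [z Hz] := wle_interleaving le_uv le_vw.
have [z' Hz' can_z'] := canonical_exists Hz.
have ex : exists z, interleaving (val u) (val v) (val w) z /\ canonical (val u) (val w) (val v) z.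
  by exists z'.
exact: (epsilon_spec _ _ ex).
Qed.

Lemma val_mirror v : in_interval u w v ->
  val (mirror v) = toggle (val u) (val w) (val v) (canonical_witness v).
Proof.
move=> /canonical_witnessP[Hz _]; rewrite /mirror insubdK //.
exact: is_shuffle_subseq (interleaving_shuffle (valP u) (valP w) Hz) (filter_subseq _ _).
Qed.

Lemma mirror_spec v : in_interval u w v ->
  [/\ in_interval u w (mirror v), mirror (mirror v) = v &
      rho (mirror v) + rho v = rho u + rho w].
Proof.
move=> v_in; have [Hz can_z] := canonical_witnessP v_in.
have Emirror := val_mirror v_in.
have mirror_in : in_interval u w (mirror v) := toggle_in_interval v_in Hz Emirror.
split=> //; last exact: rho_toggle v_in Hz can_z Emirror.
have [Hz' can_z'] := canonical_witnessP mirror_in.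
have Hz_mirror : interleaving (val u) (val (mirror v)) (val w) (canonical_witness v).
  by rewrite Emirror; apply: toggle_interleaving.
have uniq_of z : interleaving (val u) (val (mirror v)) (val w) z -> uniq z.
  by move=> /(interleaving_shuffle (valP u) (valP w)) /and3P[].
have same_witness : canonical_witness (mirror v) = canonical_witness v.
  have [[zu1 zv1 zw1 from1] [zu2 zv2 zw2 from2]] := (Hz', Hz_mirror).
  apply: (canonical_unique (u := val u) (w := val w) (v := val (mirror v))) => //;
    try exact: uniq_of.
  - by rewrite zu1 zu2.
  - by rewrite zv1 zv2.
  - by rewrite zw1 zw2.
  - by rewrite Emirror; apply: canonical_toggle.
apply: val_inj; rewrite (val_mirror mirror_in) same_witness Emirror toggleK //.
by case: Hz.
Qed.

End Involution.

Lemma involution_level_bijection (T : Type) (P : T -> Prop) (r : T -> nat) (f : T -> T) a b i :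
  (forall t, P t -> [/\ P (f t), f (f t) = t & r (f t) + r t = a + b]) ->
  exists g : {t | P t /\ r t = a + i} -> {t | P t /\ r t + i = b}, bijective g.
Proof.
move=> f_inv.
have fwd (t : {t | P t /\ r t = a + i}) : P (f (sval t)) /\ r (f (sval t)) + i = b.
  by case: t => t [Pt rt] /=; have [? _ ?] := f_inv t Pt; split=> //; lia.
have bwd (t : {t | P t /\ r t + i = b}) : P (f (sval t)) /\ r (f (sval t)) = a + i.
  by case: t => t [Pt rt] /=; have [? _ ?] := f_inv t Pt; split=> //; lia.
exists (fun t => exist _ (f (sval t)) (fwd t)), (fun t => exist _ (f (sval t)) (bwd t)).
all: move=> [t [Pt rt]]; apply: eq_sig_hprop => [? ? ?|/=]; first exact: proof_irrelevance.
all: by have [_ -> _] := f_inv t Pt.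
Qed.

Theorem corollary3p7 (M N : nat) (u w : shuffle M N) (i : nat) :
  wlt u w ->
  exists f : {v : shuffle M N | in_interval u w v /\ rho v = rho u + i} ->
             {v : shuffle M N | in_interval u w v /\ rho v + i = rho w},
    bijective f.
Proof.
(* The bijection exists for every u <= w, including u = w. *)
move=> _; apply: (involution_level_bijection (f := mirror u w)).
exact: mirror_spec.
Qed.
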